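(* Let $K$ be a field of characteristic zero and $W_n$ the Witt Lie algebra. Let $a$ be a nonzero locally finite element of $W_n$. Then for every $\lambda\in\mathbb{Z}^n$ the elements $l^+_\lambda(a)$ and $l^-_\lambda(a)$ are locally finite.
   Context: $W_n=\mathrm{Der}_K(K[x_1^{\pm1},\ldots,x_n^{\pm1}])=\bigoplus_{\alpha\in\mathbb{Z}^n}x^\alpha\mathcal{H}_n$, where $x^\alpha=x_1^{\alpha_1}\cdots x_n^{\alpha_n}$, $\mathcal{H}_n=\bigoplus_{i=1}^nKH_i$, $H_i=x_i\partial_i$. An element $a$ of a Lie algebra $\mathcal{G}$ is locally finite if $\dim_K\sum_{i\ge0}K\,\mathrm{ad}(a)^i(b)<\infty$ for all $b\in\mathcal{G}$. For $\lambda\in\mathbb{Z}^n$, the $(\mathbb{Z},\lambda)$-grading is $W_n=\bigoplus_{i\in\mathbb{Z}}W_{n,i}(\lambda)$ with $W_{n,i}(\lambda)=\bigoplus_{\alpha:\sum_j\lambda_j\alpha_j=i}x^\alpha\mathcal{H}_n$ (it is a Lie algebra grading). Writing $a=a_{i_1}+\cdots+a_{i_s}$ with $0\ne a_{i_\nu}\in W_{n,i_\nu}(\lambda)$ and $i_1<\cdots<i_s$, set $l^+_\lambda(a)=a_{i_s}$ (leading term) and $l^-_\lambda(a)=a_{i_1}$ (least term). *)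

From HB Require Import structures.
From mathcomp Require Import all_boot all_order all_algebra.
Set Implicit Arguments. Unset Strict Implicit. Unset Printing Implicit Defensive.
Import Order.TTheory GRing.Theory Num.Theory.
Local Open Scope ring_scope.

(* The Witt algebra W_n = (+)_{alpha in Z^n} x^alpha H_n over a field K.
   An element is given as a finite formal sum of terms x^alpha h, where
   alpha : 'rV[int]_n is the exponent and h : 'rV[K]_n the coordinates of
   h = sum_i h_i H_i in the basis H_1..H_n. Two formal sums denote the same
   element of W_n iff all their coefficients [coef] agree ([weq]). *)

Section Witt.
Variables (K : fieldType) (n : nat).

Definition wterm := ('rV[int]_n * 'rV[K]_n)%type.
Definition wexpr := seq wterm.

Definition coef (a : wexpr) (g : 'rV[int]_n) : 'rV[K]_n :=
  \sum_(p <- a | p.1 == g) p.2.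

Definition weq (a b : wexpr) : Prop := forall g, coef a g = coef b g.

Definition wnonzero (a : wexpr) : Prop := exists g, coef a g != 0.

(* h(beta) where h = sum_i h_i H_i and H_i(x^beta) = beta_i x^beta *)
Definition hpair (h : 'rV[K]_n) (beta : 'rV[int]_n) : K :=
  \sum_(i < n) h 0 i * (beta 0 i)%:~R.

(* [x^alpha h, x^beta h'] = x^(alpha+beta) (h(beta) h' - h'(alpha) h) *)
Definition brterm (p q : wterm) : wterm :=
  (p.1 + q.1, hpair p.2 q.1 *: q.2 - hpair q.2 p.1 *: p.2).

Definition wbr (a b : wexpr) : wexpr := [seq brterm p q | p <- a, q <- b].

Definition wscale (c : K) (a : wexpr) : wexpr := [seq (p.1, c *: p.2) | p <- a].

Definition wcomb (L : seq wexpr) (c : seq K) : wexpr :=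
  flatten [seq wscale pc.2 pc.1 | pc <- zip L c].

(* a is locally finite: for every b, the span of { ad(a)^i b | i >= 0 } is
   finite dimensional, i.e. contained in the span of finitely many elements. *)
Definition locally_finite (a : wexpr) : Prop :=
  forall b : wexpr, exists L : seq wexpr, forall i : nat,
    exists c : seq K, weq (iter i (wbr a) b) (wcomb L c).

Definition ldeg (lam alpha : 'rV[int]_n) : int := \sum_(j < n) lam 0 j * alpha 0 j.

Definition hcomp (lam : 'rV[int]_n) (d : int) (a : wexpr) : wexpr :=
  [seq p <- a | ldeg lam p.1 == d].

Definition wsupp (a : wexpr) : seq 'rV[int]_n :=
  [seq g <- map fst a | coef a g != 0].

Definition degs (lam : 'rV[int]_n) (a : wexpr) : seq int :=
  map (ldeg lam) (wsupp a).

Definition topdeg lam a : int := foldr Num.max (head 0 (degs lam a)) (degs lam a).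
Definition botdeg lam a : int := foldr Num.min (head 0 (degs lam a)) (degs lam a).

Definition lplus (lam : 'rV[int]_n) (a : wexpr) : wexpr := hcomp lam (topdeg lam a) a.
Definition lminus (lam : 'rV[int]_n) (a : wexpr) : wexpr := hcomp lam (botdeg lam a) a.

End Witt.

(* A locally finite element of W_n lies in H_n: otherwise pick an additive
   w : Z^n -> Z that is injective on {0} U supp a, and replace w by -w so that
   the w-maximal exponent al of a is nonzero.  For a suitable x^beta h0, the
   w-leading term of ad(a)^i (x^beta h0) is x^(beta + i al) times a vector
   that never vanishes in characteristic zero, so the iterates involve
   infinitely many exponents.  Elements of H_n act diagonally on the terms
   x^beta h, hence are locally finite, and the homogeneous components of an
   element of H_n stay in H_n. *)
From HB Require Import structures.
From mathcomp Require Import all_boot all_order all_algebra.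
From mathcomp Require Import zify.
Import Order.TTheory GRing.Theory Num.Theory.
Set Implicit Arguments. Unset Strict Implicit.
Local Open Scope ring_scope.

Lemma sumr_uniq_eq1 (T : eqType) (W : zmodType) (s : seq T) j (F : T -> W) :
  uniq s -> j \in s -> (forall i, i != j -> F i = 0) -> \sum_(i <- s) F i = F j.
Proof. by move=> us js F0; rewrite (bigD1_seq j) //= big1 ?addr0. Qed.

Lemma exists_inj_notin (T : eqType) (f : nat -> T) (s : seq T) :
  injective f -> exists i, f i \notin s.
Proof.
move=> f_inj; have : ~~ all (fun i => f i \in s) (iota 0 (size s).+1).
  apply/negP => /allP fs.
  have uniq_f : uniq [seq f i | i <- iota 0 (size s).+1].
    by rewrite (map_inj_uniq f_inj) iota_uniq.
  have : {subset [seq f i | i <- iota 0 (size s).+1] <= s}.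
    by move=> _ /mapP [i /fs fi ->].
  by move/(uniq_leq_size uniq_f); rewrite size_map size_iota ltnn.
by case/allPn => i _ fi; exists i.
Qed.

Section Witt.
Variables (K : fieldType) (n : nat).
Local Notation E := 'rV[int]_n.
Local Notation V := 'rV[K]_n.
Implicit Types (g d : E) (x y : V) (a c : wexpr K n).

Lemma hpairDl x y g : hpair (x + y) g = hpair x g + hpair y g.
Proof. by rewrite /hpair -big_split; apply: eq_bigr => i _; rewrite mxE mulrDl. Qed.

Lemma hpairZl (k : K) x g : hpair (k *: x) g = k * hpair x g.
Proof. by rewrite /hpair mulr_sumr; apply: eq_bigr => i _; rewrite mxE mulrA. Qed.

Lemma hpair0l g : hpair (0 : V) g = 0.
Proof. by rewrite /hpair big1 // => i _; rewrite mxE mul0r. Qed.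

Lemma hpairNl x g : hpair (- x) g = - hpair x g.
Proof. by rewrite -scaleN1r hpairZl mulN1r. Qed.

Lemma hpairDr x g d : hpair x (g + d) = hpair x g + hpair x d.
Proof. by rewrite /hpair -big_split; apply: eq_bigr => i _; rewrite mxE intrD mulrDr. Qed.

Lemma hpair0r x : hpair x 0 = 0.
Proof. by rewrite /hpair big1 // => i _; rewrite mxE mulr0. Qed.

Lemma hpairMnr x g m : hpair x (g *+ m) = hpair x g *+ m.
Proof. by elim: m => [|m IH]; rewrite ?hpair0r // !mulrS hpairDr IH. Qed.

Lemma hpair_deltal (j : 'I_n) g : hpair (delta_mx 0 j : V) g = (g 0 j)%:~R.
Proof.
rewrite /hpair (bigD1 j) //= big1 ?addr0 => [|k /negbTE kj]; rewrite mxE /=.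
  by rewrite eqxx mul1r.
by rewrite kj mul0r.
Qed.

Lemma hpair_deltar x (j : 'I_n) : hpair x (delta_mx 0 j : E) = x 0 j.
Proof.
rewrite /hpair (bigD1 j) //= big1 ?addr0 => [|k /negbTE kj]; rewrite mxE /=.
  by rewrite eqxx mulr1.
by rewrite kj mulr0.
Qed.

Definition brc g d x y : V := (brterm (g, x) (d, y)).2.

Lemma brcDl g d x x' y : brc g d (x + x') y = brc g d x y + brc g d x' y.
Proof. by rewrite /brc /= hpairDl scalerDl scalerDr opprD addrACA. Qed.

Lemma brcDr g d x y y' : brc g d x (y + y') = brc g d x y + brc g d x y'.
Proof. by rewrite /brc /= hpairDl scalerDl scalerDr opprD addrACA. Qed.

Lemma brc0l g d y : brc g d 0 y = 0.
Proof. by rewrite /brc /= hpair0l scale0r scaler0 subrr. Qed.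

Lemma brc0r g d x : brc g d x 0 = 0.
Proof. by rewrite /brc /= hpair0l scale0r scaler0 subrr. Qed.

Lemma hpair_brc g d x y e :
  hpair (brc g d x y) e = hpair x d * hpair y e - hpair y g * hpair x e.
Proof. by rewrite /brc /= hpairDl hpairNl !hpairZl. Qed.

Lemma coef_cons p a g : coef (p :: a) g = (if p.1 == g then p.2 else 0) + coef a g.
Proof. by rewrite /coef big_cons; case: ifP; rewrite ?add0r. Qed.

Lemma coef_nil g : coef ([::] : wexpr K n) g = 0.
Proof. by rewrite /coef big_nil. Qed.

Lemma coef_neq0_fst a g : coef a g != 0 -> g \in map fst a.
Proof.
elim: a => [|[x v] a IH]; first by rewrite coef_nil eqxx.
rewrite coef_cons map_cons inE; case: (eqVneq x g) => [//|_].
by rewrite add0r => /IH ->; rewrite orbT.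
Qed.

Lemma mem_wsupp a g : (g \in wsupp a) = (coef a g != 0).
Proof. by rewrite mem_filter andb_idr //; apply: coef_neq0_fst. Qed.

Lemma sum_wexpr_coef (W : zmodType) (F : E -> V -> W) a (s : seq E) :
  (forall g x y, F g (x + y) = F g x + F g y) -> uniq s ->
  {subset map fst a <= s} ->
  \sum_(p <- a) F p.1 p.2 = \sum_(g <- s) F g (coef a g).
Proof.
move=> FD us.
have F0 g : F g 0 = 0 by apply: (addrI (F g 0)); rewrite -FD !addr0.
elim: a => [|p a IH] sa.
  by rewrite big_nil big1 // => g _; rewrite coef_nil F0.
rewrite big_cons IH; last by move=> x xa; apply: sa; rewrite inE xa orbT.
under [in RHS]eq_bigr => g _ do rewrite coef_cons FD.
rewrite big_split /=; congr (_ + _).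
have ps : p.1 \in s by apply: sa; rewrite inE eqxx.
rewrite (bigD1_seq p.1) //= eqxx big1 ?addr0 // => g /negbTE gp.
by rewrite eq_sym gp F0.
Qed.

Lemma coef_wbr_sum a c (sa sc : seq E) g :
  uniq sa -> {subset map fst a <= sa} -> uniq sc -> {subset map fst c <= sc} ->
  coef (wbr a c) g = \sum_(e <- sa) \sum_(e' <- sc)
    (if e + e' == g then brc e e' (coef a e) (coef c e') else 0).
Proof.
move=> usa asa usc csc; rewrite /coef /wbr big_mkcond big_allpairs_dep /=.
transitivity (\sum_(p <- a) \sum_(e' <- sc)
                (if p.1 + e' == g then brc p.1 e' p.2 (coef c e') else 0)).
  apply: eq_bigr => p _; apply: (sum_wexpr_coef
    (F := fun e' y => if p.1 + e' == g then brc p.1 e' p.2 y else 0)) => //.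
  by move=> e' x y; case: ifP; rewrite ?brcDr ?addr0.
apply: (sum_wexpr_coef (F := fun e x => \sum_(e' <- sc)
   (if e + e' == g then brc e e' x (coef c e') else 0))) => //.
move=> e x y; rewrite -big_split; apply: eq_bigr => e' _ /=.
by case: ifP; rewrite ?brcDl ?addr0.
Qed.

Lemma coef_wbr_single a c g0 d0 g :
  (forall e e', e + e' = g -> (e, e') != (g0, d0) ->
     brc e e' (coef a e) (coef c e') = 0) ->
  coef (wbr a c) g =
    if g0 + d0 == g then brc g0 d0 (coef a g0) (coef c d0) else 0.
Proof.
move=> only_g0d0.
have subU z (s : seq E) : {subset s <= undup (z :: s)}.
  by move=> u us; rewrite mem_undup inE us orbT.
have G0 e e' : (e, e') != (g0, d0) ->
    (if e + e' == g then brc e e' (coef a e) (coef c e') else 0) = 0.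
  by move=> ne; case: eqP => // eg; apply: only_g0d0.
rewrite (coef_wbr_sum (sa := undup (g0 :: map fst a)) (sc := undup (d0 :: map fst c)))
  ?undup_uniq //.
rewrite (sumr_uniq_eq1 (j := g0)) ?undup_uniq ?mem_undup ?mem_head // => [|e eg0].
  rewrite (sumr_uniq_eq1 (j := d0)) ?undup_uniq ?mem_undup ?mem_head // => e' ed0.
  by rewrite G0 // xpair_eqE negb_and ed0 orbT.
by rewrite big1 // => e' _; rewrite G0 // xpair_eqE negb_and eg0.
Qed.

Lemma wcomb_fst (L : seq (wexpr K n)) (cs : seq K) :
  {subset map fst (wcomb L cs) <= flatten [seq map fst l | l <- L]}.
Proof.
elim: L cs => [|l L IH] [|k cs] //= g.
rewrite /wcomb /= map_cat !mem_cat => /orP [|/IH ->]; last by rewrite orbT.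
by rewrite /wscale -map_comp => ->.
Qed.

Lemma coef_hcomp lam (k : int) a g :
  coef (hcomp lam k a) g = if ldeg lam g == k then coef a g else 0.
Proof.
rewrite /coef /hcomp big_filter_cond; case: ifP => lg.
  by apply: eq_bigl => p; case: (eqVneq p.1 g) => [->|]; rewrite ?lg ?andbF.
by rewrite big1 // => p /andP [/eqP pk /eqP pg]; move: lg; rewrite -pg pk eqxx.
Qed.

(* [a] lies in the Cartan subalgebra [H_n] of [W_n]. *)
Definition cartan a : Prop := forall g, g != 0 -> coef a g = 0.

Lemma cartan_hcomp lam (k : int) a : cartan a -> cartan (hcomp lam k a).
Proof. by move=> a0 g g0; rewrite coef_hcomp a0 // if_same. Qed.

Lemma coef_wbr_cartan a c g :
  cartan a -> coef (wbr a c) g = hpair (coef a 0) g *: coef c g.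
Proof.
move=> a0; rewrite (coef_wbr_single (g0 := 0) (d0 := g)) ?add0r ?eqxx.
  by rewrite /brc /= hpair0r scale0r subr0.
move=> e e' ee' ne; case: (eqVneq e 0) => [e0|/a0 ->]; last by rewrite brc0l.
by move: ne; rewrite -ee' e0 add0r eqxx.
Qed.

Lemma coef_iter_wbr_cartan a b i g : cartan a ->
  coef (iter i (wbr a) b) g = hpair (coef a 0) g ^+ i *: coef b g.
Proof.
move=> a0; elim: i => [|i IH]; first by rewrite expr0 scale1r.
by rewrite iterS coef_wbr_cartan // IH scalerA exprS.
Qed.

Lemma cartan_locally_finite a : cartan a -> locally_finite a.
Proof.
move=> a0 b; exists [seq [:: q] | q <- b] => i.
pose f (q : wterm K n) := hpair (coef a 0) q.1 ^+ i.
exists [seq f q | q <- b] => g.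
have -> : wcomb [seq [:: q] | q <- b] [seq f q | q <- b] =
          [seq (q.1, f q *: q.2) | q <- b].
  by elim: b {a0} => [|q b IH] //; rewrite /wcomb /= in IH *; rewrite IH.
rewrite coef_iter_wbr_cartan // /coef big_map scaler_sumr big_mkcond [RHS]big_mkcond.
by apply: eq_bigr => q _ /=; case: eqP => [<-|].
Qed.

Section DominantTerm.
Variable w : E -> int.
Hypothesis wD : forall g d, w (g + d) = w g + w d.

Definition wtop c d : Prop := forall g, g != d -> w d <= w g -> coef c g = 0.

Lemma wtop_lt c d g : wtop c d -> coef c g != 0 -> g != d -> w g < w d.
Proof. by move=> top cg gd; rewrite ltNge; apply: contra cg => /(top _ gd) ->. Qed.

Lemma wtop_le c d g : wtop c d -> coef c g != 0 -> w g <= w d.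
Proof. by move=> top cg; case: (eqVneq g d) => [-> //|/(wtop_lt top cg)/ltW]. Qed.

Lemma wtop_pair a c g d e e' : wtop a g -> wtop c d ->
  coef a e != 0 -> coef c e' != 0 -> w (g + d) <= w (e + e') -> (e, e') = (g, d).
Proof.
move=> ta tc ae ce'; rewrite !wD.
have := wtop_le ta ae; have := wtop_le tc ce'.
case: (eqVneq e g) => [->|/(wtop_lt ta ae)];
  case: (eqVneq e' d) => [->|/(wtop_lt tc ce')] // *; exfalso; lia.
Qed.

Lemma coef_wbr_wtop a c g d : wtop a g -> wtop c d ->
  coef (wbr a c) (g + d) = brc g d (coef a g) (coef c d) /\ wtop (wbr a c) (g + d).
Proof.
move=> ta tc.
have top_coef e : w (g + d) <= w e ->
    coef (wbr a c) e = if g + d == e then brc g d (coef a g) (coef c d) else 0.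
  move=> le; apply: coef_wbr_single => e1 e2 ee ne.
  case: (eqVneq (coef a e1) 0) => [->|ae]; first by rewrite brc0l.
  case: (eqVneq (coef c e2) 0) => [->|ce]; first by rewrite brc0r.
  by move: ne; rewrite (wtop_pair ta tc ae ce) ?eqxx // ee.
split; first by rewrite top_coef ?eqxx.
by move=> e ne le; rewrite top_coef // eq_sym (negbTE ne).
Qed.

End DominantTerm.

Section CharZero.
Hypothesis charK0 : [pchar K] =i pred0.

Lemma intr_eq0_pchar0 (z : int) : ((z%:~R : K) == 0) = (z == 0).
Proof.
move/pcharf0P: charK0 => c0; case: z => m; first by rewrite -pmulrn c0.
by rewrite NegzE mulrNz oppr_eq0 -pmulrn c0.
Qed.

Lemma exists_hpair_neq0 g : g != 0 -> exists x : V, hpair x g != 0.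
Proof.
by case/rV0Pn => j gj; exists (delta_mx 0 j); rewrite hpair_deltal intr_eq0_pchar0.
Qed.

Lemma exists_chain_exponent (h : V) (al : E) : h != 0 ->
  exists beta : E, forall i, hpair h (al *+ i + beta) - hpair h al != 0.
Proof.
move=> hn; case: (eqVneq (hpair h al) 0) => [h0|hn0].
  have /rV0Pn [j hj] := hn; exists (delta_mx 0 j) => i.
  by rewrite hpairDr hpairMnr h0 mul0rn add0r hpair_deltar subr0.
exists (al *+ 2) => i.
rewrite hpairDr !hpairMnr -mulrnDr addn2 mulrSr addrK -mulr_natr mulf_eq0 negb_or hn0.
by move/pcharf0P: charK0 => ->.
Qed.

Section TopChain.
Variables (w : E -> int) (a : wexpr K n) (al : E).
Hypothesis wD : forall g d, w (g + d) = w g + w d.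
Hypothesis a_top : wtop w a al.
Local Notation h := (coef a al).

Fixpoint top_chain (beta : E) (x : V) (i : nat) : V :=
  if i is i'.+1 then brc al (al *+ i' + beta) h (top_chain beta x i') else x.

Lemma coef_iter_wbr_wtop beta x i :
  coef (iter i (wbr a) [:: (beta, x)]) (al *+ i + beta) = top_chain beta x i /\
  wtop w (iter i (wbr a) [:: (beta, x)]) (al *+ i + beta).
Proof.
elim: i => [|i [IHcoef IHtop]].
  rewrite /= add0r coef_cons coef_nil eqxx addr0; split => // g gb _.
  by rewrite coef_cons coef_nil eq_sym (negbTE gb) addr0.
have [coef_top top] := coef_wbr_wtop wD a_top IHtop.
by rewrite mulrS -addrA iterS coef_top IHcoef.
Qed.

Lemma hpair_top_chainS beta x i :
  hpair (top_chain beta x i.+1) al =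
  hpair (top_chain beta x i) al * (hpair h (al *+ i + beta) - hpair h al).
Proof. by rewrite /= hpair_brc mulrBr mulrC. Qed.

Hypotheses (al_nz : al != 0) (h_nz : h != 0).

Lemma top_chain_neq0 : exists beta x, forall i, top_chain beta x i != 0.
Proof.
have [x xal] := exists_hpair_neq0 al_nz; have [beta hb] := exists_chain_exponent al h_nz.
exists beta, x => i; suff : hpair (top_chain beta x i) al != 0.
  by apply: contraNneq => ->; rewrite hpair0l.
by elim: i => [//|i IH]; rewrite hpair_top_chainS mulf_neq0.
Qed.

Lemma wtop_not_locally_finite : ~ locally_finite a.
Proof.
move=> a_lf; have [beta [x chain_nz]] := top_chain_neq0.
have [L HL] := a_lf [:: (beta, x)].
have /rV0Pn [j alj] := al_nz.
have inj : injective (fun i => al *+ i + beta).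
  by move=> i k /addIr /(congr1 (fun e : E => e 0 j)); rewrite !mulmxnE; apply: mulrIn.
have [i iL] := exists_inj_notin (flatten [seq map fst l | l <- L]) inj.
have [cs chain_in_L] := HL i; have [coef_top _] := coef_iter_wbr_wtop beta x i.
move: (chain_nz i); rewrite -coef_top chain_in_L => /coef_neq0_fst/wcomb_fst.
by rewrite (negbTE iL).
Qed.

End TopChain.
End CharZero.

End Witt.

Section Separation.
Variable n : nat.
Local Notation E := 'rV[int]_n.

Definition row_poly (x : E) : {poly int} := \sum_(j < n) x 0 j *: 'X^j.

Lemma row_polyD x y : row_poly (x + y) = row_poly x + row_poly y.
Proof. by rewrite /row_poly -big_split; apply: eq_bigr => j _; rewrite mxE scalerDl. Qed.

Lemma row_polyB x y : row_poly (x - y) = row_poly x - row_poly y.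
Proof. by rewrite /row_poly -sumrB; apply: eq_bigr => j _; rewrite !mxE scalerBl. Qed.

Lemma coef_row_poly x (j : 'I_n) : (row_poly x)`_j = x 0 j.
Proof.
rewrite /row_poly coef_sum (bigD1 j) //= coefZ coefXn eqxx mulr1 big1 ?addr0 // => k kj.
by rewrite coefZ coefXn eq_sym (negbTE (kj : (k : nat) != j)) mulr0.
Qed.

Lemma row_poly_neq0 x : x != 0 -> row_poly x != 0.
Proof. by case/rV0Pn => j; apply: contraNneq => x0; rewrite -coef_row_poly x0 coef0. Qed.

(* Evaluate [row_poly] at an integer avoiding the finitely many roots of the
   differences of elements of [S]. *)
Lemma exists_additive_inj_in (S : seq E) : exists w : E -> int,
  (forall g d, w (g + d) = w g + w d) /\ {in S &, injective w}.
Proof.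
pose P := \prod_(x <- S) \prod_(y <- S | x != y) row_poly (x - y).
have P_nz : P != 0.
  rewrite prodf_seq_neq0; apply/allP => x _ /=; rewrite prodf_seq_neq0.
  by apply/allP => y _; apply/implyP => xy; rewrite row_poly_neq0 // subr_eq0.
have [t Pt] : exists t, ~~ root P t.
  have : ~~ all (root P) [seq i%:Z | i <- iota 0 (size P)].
    apply/negP => /(max_poly_roots P_nz); rewrite map_inj_uniq ?iota_uniq.
      by rewrite size_map size_iota ltnn => /(_ isT).
    by move=> ? ? [].
  by case/allPn => t _ Pt; exists t.
exists (fun x => (row_poly x).[t]); split => [g d|x y xS yS /= wxy].
  by rewrite row_polyD hornerD.
apply: contraNeq Pt => xy; rewrite /root /P horner_prod prodf_seq_eq0.
apply/hasP; exists x => //=; rewrite horner_prod prodf_seq_eq0.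
by apply/hasP; exists y => //=; rewrite xy row_polyB hornerD hornerN wxy subrr.
Qed.

End Separation.

Lemma exists_argmax (T : eqType) (f : T -> int) (S : seq T) : S != [::] ->
  exists2 m, m \in S & forall y, y \in S -> f y <= f m.
Proof.
elim: S => [//|x S IH] _; case: (eqVneq S [::]) => [->|/IH [m mS m_max]].
  by exists x => [|y /predU1P [->|]] //; rewrite mem_head.
case: (leP (f x) (f m)) => [xm|mx].
  by exists m => [|y /predU1P [->|/m_max]] //; rewrite inE mS orbT.
exists x => [|y /predU1P [->|/m_max ym]] //; first exact: mem_head.
exact: le_trans ym (ltW mx).
Qed.

Lemma locally_finite_cartan (K : fieldType) n (a : wexpr K n) :
  [pchar K] =i pred0 -> locally_finite a -> cartan a.
Proof.
move=> charK0 a_lf g0 g0_nz; apply/eqP; apply: contraT => ag0.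
pose S := 0 :: wsupp a.
have inS g : coef a g != 0 -> g \in S by rewrite inE mem_wsupp orbC => ->.
have [w [wD w_inj]] := exists_additive_inj_in S.
wlog w0g0 : w wD w_inj / w 0 < w g0.
  move=> wlog_w; case: (ltgtP (w 0) (w g0)) => [|lt|eq]; first exact: wlog_w.
    apply: (wlog_w (fun x => - w x)); rewrite ?ltrN2 //.
      by move=> g d; rewrite wD opprD.
    by move=> x y xS yS /oppr_inj; apply: w_inj.
  by move: g0_nz; rewrite -(w_inj _ _ (mem_head _ _) (inS _ ag0) eq) eqxx.
have [M MS M_max] := exists_argmax w (isT : S != [::]).
have M_nz : M != 0.
  by apply: contraTneq w0g0 => M0; rewrite -leNgt -M0 M_max ?inS.
have aM : coef a M != 0 by move: MS; rewrite inE (negbTE M_nz) mem_wsupp.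
have M_top : wtop w a M.
  move=> g gM le; apply: contraTeq gM => ag; rewrite negbK; apply/eqP/w_inj; rewrite ?inS //.
  by apply/eqP; rewrite eq_le le M_max ?inS.
by case: (wtop_not_locally_finite charK0 wD M_top M_nz aM a_lf).
Qed.

Unset Implicit Arguments.

Theorem lemma2p3 (K : fieldType) (n : nat) (charK0 : [pchar K] =i pred0)
  (a : wexpr K n) (a_nz : wnonzero a) (a_lf : locally_finite a)
  (lam : 'rV[int]_n) :
  locally_finite (lplus lam a) /\ locally_finite (lminus lam a).
Proof.
have a_cartan := locally_finite_cartan charK0 a_lf.
by split; apply/cartan_locally_finite/cartan_hcomp.
Qed.
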